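(* Let $R$ be a von Neumann regular semiartinian ring with primitive factors artinian, of Loewy length $\sigma+1$, with dimension sequence $\{(\lambda_\alpha,\{(n_{\alpha\beta},K_{\alpha\beta})\mid\beta<\lambda_\alpha\})\mid\alpha\le\sigma\}$. Then the following are equivalent: (i) $R$ is commutative; (ii) for all $\alpha\le\sigma$ and $\beta<\lambda_\alpha$, $K_{\alpha\beta}$ is commutative and $n_{\alpha\beta}=1$; (iii) for each $\beta<\lambda_0$, $K_{0\beta}$ is commutative and $n_{0\beta}=1$.
   Context: Socle sequence of $R$: $S_0=0$, $S_{\alpha+1}/S_\alpha=\mathrm{Soc}(R/S_\alpha)$, unions at limits; semiartinian of Loewy length $\sigma+1$ means $S_{\sigma+1}=R$. Primitive factors artinian: $R/P$ artinian for each primitive ideal $P$. For such rings, for each $\alpha\le\sigma$ the layer $S_{\alpha+1}/S_\alpha$ is isomorphic as a ring without unit to $\bigoplus_{\beta<\lambda_\alpha}M_{n_{\alpha\beta}}(K_{\alpha\beta})$, where $\lambda_\alpha>0$ is the number of homogeneous components of the layer, $n_{\alpha\beta}$ positive integers and $K_{\alpha\beta}$ skew-fields (with $K_{\alpha\beta}$ the endomorphism ring of the simple module whose isotypic component is the $\beta$-th homogeneous component); these data form the dimension sequence of $R$. *)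

(* Right modules over an abstract (possibly infinite) ring R
   are represented concretely via right ideals of R: every module occurring
   in the socle sequence is a subquotient J/I of R_R. *)
From mathcomp Require Import all_boot all_algebra.
Set Implicit Arguments. Unset Strict Implicit. Unset Printing Implicit Defensive.
Import GRing.Theory.
Local Open Scope ring_scope.

Section RingDefs.
Variable R : nzRingType.

Definition subsetR (A B : R -> Prop) := forall x, A x -> B x.

Definition right_ideal (J : R -> Prop) : Prop :=
  [/\ J 0, (forall x y, J x -> J y -> J (x - y)) & (forall x r, J x -> J (x * r))].

Definition ideal (I : R -> Prop) : Prop :=
  right_ideal I /\ (forall x r, I x -> I (r * x)).

Definition commutative_ring : Prop := forall a b : R, a * b = b * a.

Definition von_neumann_regular : Prop := forall a : R, exists x, a * x * a = a.

Definition maximal_right_ideal (M : R -> Prop) : Prop :=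
  [/\ right_ideal M, ~ M 1 &
      forall N, right_ideal N -> subsetR M N -> N 1 \/ subsetR N M].

(* right primitive ideal: the annihilator of a simple right module R/M,
   M a maximal right ideal; ann(R/M) = {r | forall s, s r \in M}. *)
Definition primitive_ideal (P : R -> Prop) : Prop :=
  exists M, maximal_right_ideal M /\ forall r, P r <-> (forall s, M (s * r)).

(* R/P is (right) artinian: DCC on right ideals of R/P, i.e. on right ideals
   of R containing P. *)
Definition artinian_factor (P : R -> Prop) : Prop :=
  forall J : nat -> (R -> Prop),
    (forall n, right_ideal (J n) /\ subsetR P (J n) /\ subsetR (J n.+1) (J n)) ->
    exists m, forall n, (m <= n)%N -> subsetR (J m) (J n).

Definition primitive_factors_artinian : Prop :=
  forall P, primitive_ideal P -> artinian_factor P.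

(* J/I is a minimal right ideal of R/I, i.e. a simple submodule of (R/I)_R *)
Definition minimal_over (I J : R -> Prop) : Prop :=
  [/\ right_ideal J, subsetR I J, (exists x, J x /\ ~ I x) &
      forall J', right_ideal J' -> subsetR I J' -> subsetR J' J ->
                 subsetR J' I \/ subsetR J J'].

(* preimage in R of Soc(R/I): I + sum of all minimal right ideals over I *)
Definition soc_over (I : R -> Prop) : R -> Prop :=
  fun x => exists s : seq R,
    (forall y, y \in s -> exists J, minimal_over I J /\ J y) /\
    I (x - \sum_(y <- s) y).

(* The socle sequence S_alpha as a set of ideals: S_0 = 0, successor step
   S_{alpha+1} = soc_over S_alpha, unions at limits (the union of any
   nonempty set of terms of the chain is again a term). *)
Inductive socle_stage : (R -> Prop) -> Prop :=
  | socle_zero : socle_stage (fun x => x = 0)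
  | socle_succ I : socle_stage I -> socle_stage (soc_over I)
  | socle_union (F : (R -> Prop) -> Prop) :
      (exists I, F I) -> (forall I, F I -> socle_stage I) ->
      socle_stage (fun x => exists I, F I /\ I x).

Definition semiartinian : Prop :=
  exists S, socle_stage S /\ forall x, S x.

(* R-endomorphisms of the module J/I, represented by lifts f : R -> R
   (only the values on J matter, modulo I). *)
Definition endo (I J : R -> Prop) (f : R -> R) : Prop :=
  [/\ (forall x, J x -> J (f x)),
      (forall x y, J x -> J y -> I (f (x + y) - (f x + f y))),
      (forall x r, J x -> I (f (x * r) - f x * r)) &
      (forall x, I x -> I (f x))].

Definition End_commutative (I J : R -> Prop) : Prop :=
  forall f g, endo I J f -> endo I J g ->
    forall x, J x -> I (f (g x) - g (f x)).

(* J/I has dimension n as a left vector space over K = End_R(J/I):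
   it has a K-basis of n elements. *)
Definition End_dim (I J : R -> Prop) (n : nat) : Prop :=
  exists xs : 'I_n -> R,
    [/\ (forall i, J (xs i)),
        (forall y, J y -> exists fs : 'I_n -> R -> R,
            (forall i, endo I J (fs i)) /\ I (y - \sum_i fs i (xs i))) &
        (forall fs : 'I_n -> R -> R, (forall i, endo I J (fs i)) ->
            I (\sum_i fs i (xs i)) -> forall i, I (fs i (xs i)))].

End RingDefs.

(* (i) => (ii): over a commutative ring a simple subquotient J/I is generated
   by any x0 in J \ I, so every endomorphism is a right multiplication and
   x0 is a basis.
   (iii) => (i): in a regular ring a minimal right ideal is eR, e idempotent,
   and left multiplications by eRe are endomorphisms of it, so eRe is
   commutative; dimension 1 then forces eR = eRe.  The socle of a semiartinian
   ring is essential: every nonzero t has a minimal fR inside tR.  For t in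
   (1 - e)Re, and then for t = ab - ba once every such e is known to be
   central, one gets f t = 0, whence f = f f = 0.  Essentiality is proved
   along the socle sequence, whose stages form a chain. *)

From mathcomp Require Import all_boot all_algebra.
From Stdlib Require Import Classical FunctionalExtensionality PropExtensionality.
Set Implicit Arguments. Unset Strict Implicit. Unset Printing Implicit Defensive.
Import GRing.Theory.
Local Open Scope ring_scope.

Lemma subrACA (V : zmodType) (x y a b : V) : x - y - (a - b) = x - a - (y - b).
Proof. by rewrite opprB [in RHS]opprB addrACA [in RHS]addrACA (addrC (- y)). Qed.

Section RightIdeals.
Variable R : nzRingType.
Local Notation zeroR := (fun z : R => z = 0).
Implicit Types (A B C I J L X : R -> Prop) (x y z : R).

Lemma subsetR_antisym A B : subsetR A B -> subsetR B A -> A = B.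
Proof.
move=> AB BA; apply: functional_extensionality => x.
by apply: propositional_extensionality; split; [apply: AB | apply: BA].
Qed.

Section Closure.
Variables (J : R -> Prop) (rJ : right_ideal J).

Lemma right_ideal0 : J 0.
Proof. by case: rJ. Qed.

Lemma right_idealB x y : J x -> J y -> J (x - y).
Proof. by case: rJ => _ + _; apply. Qed.

Lemma right_idealM x r : J x -> J (x * r).
Proof. by case: rJ => _ _; apply. Qed.

Lemma right_idealN x : J x -> J (- x).
Proof. by move=> Jx; rewrite -sub0r; apply: right_idealB => //; apply: right_ideal0. Qed.

Lemma right_idealD x y : J x -> J y -> J (x + y).
Proof. by move=> Jx Jy; rewrite -[y]opprK; apply/right_idealB/right_idealN. Qed.

End Closure.

Definition principalR x : R -> Prop := fun y => exists r, y = x * r.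

Definition addR A B : R -> Prop := fun z => exists a, A a /\ B (z - a).

Definition capR A B : R -> Prop := fun z => A z /\ B z.

Lemma right_ideal_zero : right_ideal zeroR.
Proof. by split=> // [x y -> ->|x r ->]; rewrite ?subr0 ?mul0r. Qed.

Lemma right_ideal_principal x : right_ideal (principalR x).
Proof.
split; first by exists 0; rewrite mulr0.
- by move=> _ _ [r1 ->] [r2 ->]; exists (r1 - r2); rewrite mulrBr.
- by move=> _ r [r1 ->]; exists (r1 * r); rewrite mulrA.
Qed.

Lemma principalR_id x : principalR x x.
Proof. by exists 1; rewrite mulr1. Qed.

Lemma principalR_sub J x : right_ideal J -> J x -> subsetR (principalR x) J.
Proof. by move=> rJ Jx _ [r ->]; apply: right_idealM. Qed.

Lemma right_ideal_add A B : right_ideal A -> right_ideal B -> right_ideal (addR A B).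
Proof.
move=> rA rB; split.
- by exists 0; rewrite subr0; split; apply: right_ideal0.
- move=> x y [a [Aa Bxa]] [b [Ab Byb]]; exists (a - b); split; first exact: right_idealB.
  by rewrite subrACA; apply: right_idealB.
- move=> x r [a [Aa Bxa]]; exists (a * r); split; first exact: right_idealM.
  by rewrite -mulrBl; apply: right_idealM.
Qed.

Lemma addR_subr A B : right_ideal A -> subsetR B (addR A B).
Proof. by move=> rA x Bx; exists 0; rewrite subr0; split=> //; apply: right_ideal0. Qed.

Lemma right_ideal_cap A B : right_ideal A -> right_ideal B -> right_ideal (capR A B).
Proof.
move=> rA rB; split; first by split; apply: right_ideal0.
- by move=> x y [Ax Bx] [Ay By]; split; apply: right_idealB.
- by move=> x r [Ax Bx]; split; apply: right_idealM.
Qed.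

Definition eqmod I u v := I (u - v).

Section Congruence.
Variables (I : R -> Prop) (rI : right_ideal I).

Lemma eqmod_sym u v : eqmod I u v -> eqmod I v u.
Proof. by move=> Iuv; rewrite /eqmod -opprB; apply: (right_idealN rI). Qed.

Lemma eqmod_trans v u w : eqmod I u v -> eqmod I v w -> eqmod I u w.
Proof. by move=> Iuv Ivw; rewrite /eqmod -(subrKA v); apply: (right_idealD rI). Qed.

Lemma eqmodMr u v c : eqmod I u v -> eqmod I (u * c) (v * c).
Proof. by move=> Iuv; rewrite /eqmod -mulrBl; apply: (right_idealM rI). Qed.

Lemma endo_eqmod J f u v : right_ideal J -> endo I J f -> J u -> J v ->
  eqmod I u v -> eqmod I (f u) (f v).
Proof.
move=> rJ [_ fD _ fI] Ju Jv Iuv.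
have Juv : J (u - v) by apply: right_idealB.
have := fD _ _ Jv Juv; rewrite (addrC v) subrK => fuv.
by apply: eqmod_trans fuv _; rewrite /eqmod addrAC subrr add0r; apply: fI.
Qed.

End Congruence.

Lemma minimal_over_principal I J x0 : right_ideal I -> minimal_over I J ->
  J x0 -> ~ I x0 -> forall y, J y -> exists r, eqmod I y (x0 * r).
Proof.
move=> rI [rJ IJ _ minJ] Jx0 nIx0.
pose J' := addR (principalR x0) I.
have rJ' : right_ideal J' by apply: right_ideal_add => //; apply: right_ideal_principal.
have J'J : subsetR J' J.
  move=> y [_ [[r ->] Iy]]; rewrite -(subrK (x0 * r) y).
  by apply: right_idealD => //; [apply: IJ | apply: right_idealM].
case: (minJ J' rJ' (addR_subr (right_ideal_principal x0)) J'J) => [J'I|JJ' y Jy].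
  case: nIx0; apply: J'I; exists x0; rewrite subrr.
  by split; [apply: principalR_id | apply: right_ideal0].
by have [_ [[r ->] Iy]] := JJ' y Jy; exists r.
Qed.

Lemma soc_over_sub I : subsetR I (soc_over I).
Proof. by move=> x Ix; exists [::]; rewrite big_nil subr0. Qed.

Lemma right_ideal_soc_over I : right_ideal I -> right_ideal (soc_over I).
Proof.
move=> rI; split; first by apply: soc_over_sub; apply: right_ideal0.
- move=> x y [s1 [H1 Ix]] [s2 [H2 Iy]]; exists (s1 ++ map -%R s2); split.
    move=> z; rewrite mem_cat => /orP[/H1 //|/mapP[w /H2[J [mJ Jw]] ->]].
    by exists J; split=> //; case: mJ => rJ _ _ _; apply: right_idealN.
  by rewrite big_cat big_map sumrN subrACA; apply: right_idealB.
- move=> x r [s [Hs Ix]]; exists (map ( *%R^~ r) s); split.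
    move=> _ /mapP[w /Hs[J [mJ Jw]] ->].
    by exists J; split=> //; case: mJ => rJ _ _ _; apply: right_idealM.
  by rewrite big_map -mulr_suml -mulrBl; apply: right_idealM.
Qed.

Lemma socle_stage0 I : socle_stage I -> I 0.
Proof.
elim=> [//|I0 _ I00|F [I0 FI0] _ IH]; first exact: soc_over_sub.
by exists I0; split=> //; apply: IH.
Qed.

Definition properR A B := subsetR A B /\ ~ subsetR B A.

Definition extreme_stage C :=
  forall X, socle_stage X -> properR X C -> subsetR (soc_over X) C.

Lemma extreme_stage_cmp C X : socle_stage C -> extreme_stage C -> socle_stage X ->
  subsetR X C \/ subsetR (soc_over C) X.
Proof.
move=> SC EC; elim: X /.
- by left=> y ->; apply: socle_stage0.
- move=> X SX [XC|CX]; last by right=> y /CX /soc_over_sub.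
  have [CX|nCX] := classic (subsetR C X); last by left; apply: EC.
  by right; rewrite (subsetR_antisym XC CX).
- move=> F _ SF IH.
  have [FC|nFC] := classic (forall I, F I -> subsetR I C).
    by left=> y [I [FI Iy]]; apply: (FC I).
  have [I /(imply_to_and (F I))[FI nIC]] := not_all_ex_not _ _ nFC.
  by case: (IH I FI) => [/nIC[]|CI]; right=> y /CI Iy; exists I.
Qed.

Lemma socle_stage_extreme C : socle_stage C -> extreme_stage C.
Proof.
elim=> [X SX [_ nX]|{}C SC EC X SX [XC nCX]|F _ SF IH X SX [XF nFX]].
- by case: nX => y ->; apply: socle_stage0.
- case: (extreme_stage_cmp SC EC SX) => [XC'|/nCX[]].
  have [C'X|nCX'] := classic (subsetR C X); first by rewrite (subsetR_antisym XC' C'X).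
  by move=> y /(EC X SX (conj XC' nCX')) /soc_over_sub.
- have [FX|nFX'] := classic (forall I, F I -> subsetR I X).
    by case: nFX => y [I [FI Iy]]; apply: (FX I).
  have [I /(imply_to_and (F I))[FI nIX]] := not_all_ex_not _ _ nFX'.
  case: (extreme_stage_cmp (SF I FI) (IH I FI) SX) => [XI|IX].
    by move=> y /(IH I FI X SX (conj XI nIX)) Iy; exists I.
  by case: nIX => y /soc_over_sub /IX.
Qed.

Lemma socle_stage_total A B : socle_stage A -> socle_stage B ->
  subsetR A B \/ subsetR B A.
Proof.
move=> SA SB; case: (extreme_stage_cmp SB (socle_stage_extreme SB) SA) => [|BA]; first by left.
by right=> y /soc_over_sub /BA.
Qed.

Lemma socle_stage_right_ideal I : socle_stage I -> right_ideal I.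
Proof.
elim=> [|{}I _ rI|F [I0 FI0] SF IH]; first exact: right_ideal_zero.
  exact: right_ideal_soc_over.
split; first by exists I0; split=> //; apply: right_ideal0; apply: IH.
- move=> x y [I1 [FI1 I1x]] [I2 [FI2 I2y]].
  case: (socle_stage_total (SF _ FI1) (SF _ FI2)) => [I12|I21].
    by exists I2; split=> //; apply: (right_idealB (IH _ FI2)) => //; apply: I12.
  by exists I1; split=> //; apply: (right_idealB (IH _ FI1)) => //; apply: I21.
- by move=> x r [I1 [FI1 I1x]]; exists I1; split=> //; apply: (right_idealM (IH _ FI1)).
Qed.

Definition all_minimal_over I (Js : seq (R -> Prop)) : Prop :=
  foldr (fun J P => minimal_over I J /\ P) True Js.

Lemma soc_over_sum I x : soc_over I x ->
  exists Js, all_minimal_over I Js /\ foldr addR I Js x.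
Proof.
case=> s []; elim: s x => [|y s IH] x Hs Ix.
  by exists [::]; split=> //; move: Ix; rewrite big_nil subr0.
have [J [mJ Jy]] := Hs y (mem_head _ _).
have [Js [mJs Lxy]] : exists Js, all_minimal_over I Js /\ foldr addR I Js (x - y).
  apply: IH; first by move=> z zs; apply: Hs; rewrite inE zs orbT.
  by move: Ix; rewrite big_cons opprD addrA.
by exists (J :: Js); split=> //; exists y.
Qed.

Lemma right_ideal_sum I Js : right_ideal I -> all_minimal_over I Js ->
  right_ideal (foldr addR I Js).
Proof.
move=> rI; elim: Js => [//|J Js IH] /= [[rJ _ _ _] /IH rL].
exact: right_ideal_add.
Qed.

Lemma subsetR_sum I Js : all_minimal_over I Js -> subsetR I (foldr addR I Js).
Proof.
elim: Js => [_ //|J Js IH] /= [[rJ _ _ _] /IH IL] x Ix.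
by apply: addR_subr => //; apply: IL.
Qed.

Definition has_minimal A := exists J0, minimal_over zeroR J0 /\ subsetR J0 A.

Lemma has_minimal_sub A B : subsetR A B -> has_minimal A -> has_minimal B.
Proof. by move=> AB [J0 [mJ0 J0A]]; exists J0; split=> // x /J0A /AB. Qed.

Lemma minimal_over0_complement I J L A :
  right_ideal L -> minimal_over I J -> subsetR I L ->
  right_ideal A -> subsetR A (addR J L) -> (forall z, A z -> L z -> z = 0) ->
  (exists z, A z /\ z <> 0) -> minimal_over zeroR A.
Proof.
(* A embeds into the simple module (J + L)/L. *)
move=> rL [rJ IJ _ minJ] IL rA AJL AL0 nzA; split=> //.
- by move=> x ->; apply: right_ideal0.
move=> B rB _ BA.
have [[b [Bb nb]]|] := classic (exists b, B b /\ b <> 0); last first.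
  by move=> nzB; left=> b Bb; apply: NNPP => nb; apply: nzB; exists b.
right; pose B' := capR (addR B L) J.
have rB' : right_ideal B' by apply: right_ideal_cap => //; apply: right_ideal_add.
have IB' : subsetR I B' by move=> x Ix; split; [apply: addR_subr; last apply: IL | apply: IJ].
case: (minJ B' rB' IB' (fun x => @proj2 _ _)) => [B'I|JB'].
  case: nb; have [j [Jj Lbj]] := AJL b (BA b Bb).
  have Lj : L j.
    apply/IL/B'I; split=> //; exists b; split=> //.
    by rewrite -opprB; apply: right_idealN.
  by apply: AL0 (BA b Bb) _; rewrite -(subrK j b); apply: right_idealD.
move=> a Aa; have [j [Jj Laj]] := AJL a Aa.
have [[b' [Bb' Ljb']] _] := JB' j Jj.
suff: a - b' = 0 by move/subr0_eq ->.
apply: AL0; first by apply: right_idealB => //; apply: BA.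
by rewrite -(subrKA j); apply: right_idealD.
Qed.

Lemma has_minimal_sum I Js A :
  right_ideal I -> (forall x, I x -> x <> 0 -> has_minimal (principalR x)) ->
  all_minimal_over I Js -> right_ideal A -> subsetR A (foldr addR I Js) ->
  (exists z, A z /\ z <> 0) -> has_minimal A.
Proof.
move=> rI minI; elim: Js A => [|J Js IH] A /=.
  move=> _ rA AI [z [Az nz]]; apply: has_minimal_sub (minI z (AI z Az) nz).
  exact: principalR_sub.
move=> [mJ mJs] rA AL nzA; have rL := right_ideal_sum rI mJs.
have [[z [[Az Lz] nz]]|AL0] := classic (exists z, capR A (foldr addR I Js) z /\ z <> 0).
  apply: (@has_minimal_sub (capR A (foldr addR I Js))); first by move=> x [].
  apply: IH mJs _ _ _; [exact: right_ideal_cap | by move=> x [] | by exists z].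
exists A; split=> //; apply: minimal_over0_complement rL mJ (subsetR_sum mJs) rA AL _ nzA.
by move=> x Ax Lx; apply: NNPP => nx; apply: AL0; exists x.
Qed.

Lemma socle_stage_has_minimal I x : socle_stage I -> I x -> x <> 0 ->
  has_minimal (principalR x).
Proof.
move=> SI; elim: SI x => [x -> //|{}I SI IH x /soc_over_sum[Js [mJs Lx]] nx|F _ _ IH x].
  apply: (has_minimal_sum (socle_stage_right_ideal SI) IH mJs (right_ideal_principal x)).
    by apply: principalR_sub => //; apply: right_ideal_sum => //; apply: socle_stage_right_ideal.
  by exists x; split=> //; apply: principalR_id.
by move=> [I0 [FI0 I0x]]; apply: IH FI0 x I0x.
Qed.

Lemma semiartinian_has_minimal x : semiartinian R -> x <> 0 ->
  has_minimal (principalR x).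
Proof. by case=> S [SS allS]; apply: socle_stage_has_minimal SS (allS x). Qed.

End RightIdeals.

Arguments eqmod_trans {R I} rI v {u w}.

Section CommutativeRing.
Variables (R : nzRingType) (mulC : commutative_ring R).
Variables (I J : R -> Prop) (rI : right_ideal I) (mJ : minimal_over I J).

Lemma endo_mulr r : endo I J ( *%R^~ r).
Proof.
case: mJ => rJ _ _ _; split=> [x Jx|x y _ _|x s _|x Ix] /=.
- exact: right_idealM.
- by rewrite mulrDl subrr; apply: right_ideal0.
- by rewrite -!mulrA (mulC r) subrr; apply: right_ideal0.
- exact: right_idealM.
Qed.

Lemma endo_eqmod_mulr x0 f : J x0 -> ~ I x0 -> endo I J f ->
  exists a, forall y, J y -> eqmod I (f y) (y * a).
Proof.
move=> Jx0 nIx0 ef; have rJ : right_ideal J by case: mJ.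
have genJ := minimal_over_principal rI mJ Jx0 nIx0.
have [fJ _ fM _] := ef.
have [a fx0] := genJ _ (fJ _ Jx0); exists a => y Jy.
have [r yx0] := genJ _ Jy.
apply: (eqmod_trans rI (f (x0 * r))).
  by have := endo_eqmod rI rJ ef Jy (right_idealM rJ r Jx0) yx0.
apply: (eqmod_trans rI (f x0 * r)); first exact: fM.
apply: (eqmod_trans rI (x0 * a * r)); first exact: eqmodMr rI _ _ _ fx0.
by rewrite -mulrA (mulC a) mulrA; apply: eqmodMr rI _ _ _ (eqmod_sym rI yx0).
Qed.

Lemma End_commutative_comm : End_commutative I J.
Proof.
move=> f g ef eg x Jx; have [_ _ [x0 [Jx0 nIx0]] _] := mJ.
have [a Ha] := endo_eqmod_mulr Jx0 nIx0 ef.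
have [b Hb] := endo_eqmod_mulr Jx0 nIx0 eg.
have [[gJ _ _ _] [fJ _ _ _]] := (eg, ef).
apply: (eqmod_trans rI (g x * a)); first exact/Ha/gJ.
apply: (eqmod_trans rI (x * b * a)); first exact: eqmodMr rI _ _ _ (Hb x Jx).
apply: (eqmod_trans rI (f x * b)); last exact/(eqmod_sym rI)/Hb/fJ.
by rewrite -mulrA (mulC b) mulrA; apply: eqmodMr rI _ _ _ (eqmod_sym rI (Ha x Jx)).
Qed.

Lemma End_dim1_comm : End_dim I J 1.
Proof.
have [_ _ [x0 [Jx0 nIx0]] _] := mJ.
exists (fun=> x0); split=> // [y Jy|fs _ Ifs i]; last by rewrite (ord1 i); rewrite big_ord1 in Ifs.
have [r yx0] := minimal_over_principal rI mJ Jx0 nIx0 Jy.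
by exists (fun=> *%R^~ r); split=> [i|]; [apply: endo_mulr | rewrite big_ord1].
Qed.

End CommutativeRing.

Section CornerRings.
Variable R : nzRingType.
Local Notation zeroR := (fun z : R => z = 0).
Implicit Types (J : R -> Prop) (e r : R).

Definition idempotent_generator J e :=
  [/\ e * e = e, e <> 0, J e & forall y, J y -> e * y = y].

Lemma minimal_idempotent_generator J : von_neumann_regular R ->
  minimal_over zeroR J -> exists e, idempotent_generator J e.
Proof.
move=> vN [rJ _ [x [Jx nx]] minJ]; have [y xyx] := vN x.
have ee : x * y * (x * y) = x * y by rewrite mulrA xyx.
have ne : x * y <> 0 by move=> e0; apply: nx; rewrite -xyx e0 mul0r.
exists (x * y); split=> // [|z Jz]; first exact: right_idealM.
case: (minJ _ (right_ideal_principal (x * y))).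
- by move=> _ ->; exists 0; rewrite mulr0.
- by apply: principalR_sub => //; apply: right_idealM.
- by move/(_ _ (principalR_id _)).
- by move=> /(_ z Jz)[r ->]; rewrite mulrA ee.
Qed.

Lemma endo_mull J c : (forall x, J x -> J (c * x)) -> endo zeroR J ( *%R c).
Proof.
move=> cJ; split=> // [x y _ _|x r _|x ->]; by rewrite ?mulrDr ?mulrA ?subrr ?mulr0.
Qed.

Lemma corner_mulC J e : right_ideal J -> End_commutative zeroR J ->
  e * e = e -> J e -> forall r s, e * r * e * (e * s * e) = e * s * e * (e * r * e).
Proof.
move=> rJ EndC ee Je r s.
have cornerJ t x : J x -> J (e * t * e * x) by move=> Jx; rewrite -!mulrA; apply: right_idealM.
have := EndC _ _ (endo_mull (cornerJ r)) (endo_mull (cornerJ s)) e Je.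
by rewrite /= -!(mulrA _ e e) ee; apply: subr0_eq.
Qed.

Lemma End_dim1_corner_span J e : right_ideal J -> End_dim zeroR J 1 ->
  idempotent_generator J e ->
  exists2 x0, J x0 & forall y, J y -> exists t, y = e * t * e * x0.
Proof.
move=> rJ [xs [Jxs spanJ _]] [ee _ Je eJ]; exists (xs ord0) => // y Jy.
have ex0 := eJ _ (Jxs ord0).
have [fs [/(_ ord0)[gJ _ gM _]]] := spanJ y Jy.
rewrite /= big_ord1 => /subr0_eq ->; exists (fs ord0 e).
have := gM e (xs ord0) Je; rewrite /= ex0 => /subr0_eq ->.
by rewrite -(mulrA _ e) ex0 eJ //; apply: gJ.
Qed.

Lemma idempotent_generator_corner J e : minimal_over zeroR J ->
  End_commutative zeroR J -> End_dim zeroR J 1 -> idempotent_generator J e ->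
  forall r, e * r * e = e * r.
Proof.
move=> mJ EndC EndD geJ r; have [rJ _ _ minJ] := mJ; have [ee ne Je eJ] := geJ.
have [x0 Jx0 spanJ] := End_dim1_corner_span rJ EndD geJ.
(* e = c x0 with c in eRe; c is invertible in the commutative ring eRe and x0
   turns out to be its inverse, so x0 lies in eRe. *)
have [t0 et0] := spanJ e Je; set c := e * t0 * e in et0.
have Jc : J c by rewrite /c -mulrA; apply: right_idealM.
have [v ecv] : exists v, e = c * v.
  case: (minJ _ (right_ideal_principal c)) => [_ ->|||/(_ e Je)//].
  - by exists 0; rewrite mulr0.
  - exact: principalR_sub.
  by move/(_ _ (principalR_id c)) => c0; case: ne; rewrite et0 c0 mul0r.
set c' := e * v * e.
have cc' : c * c' = e by rewrite /c' !mulrA /c -(mulrA _ e e) ee -/c -ecv ee.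
have c'c : c' * c = e by rewrite /c' /c (corner_mulC rJ EndC ee Je) -/c -/c' cc'.
have x0c' : x0 = c' by rewrite -(eJ _ Jx0) -c'c -mulrA -et0 /c' -mulrA ee.
have [t ->] := spanJ (e * r) (right_idealM rJ r Je).
by rewrite x0c' /c' !mulrA -!(mulrA _ e e) !ee.
Qed.

End CornerRings.

Section CommutativeCorners.
Variable R : nzRingType.
Local Notation zeroR := (fun z : R => z = 0).
Hypotheses (vN : von_neumann_regular R) (SA : semiartinian R).
Hypothesis minC : forall J, minimal_over zeroR J ->
  End_commutative zeroR J /\ End_dim zeroR J 1.

Lemma minimal_idempotent_corner J e : minimal_over zeroR J ->
  idempotent_generator J e -> forall r, e * r * e = e * r.
Proof.
by move=> mJ; have [EndC EndD] := minC mJ; apply: idempotent_generator_corner.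
Qed.

Lemma minimal_idempotent_central J e : minimal_over zeroR J ->
  idempotent_generator J e -> forall r, r * e = e * r.
Proof.
move=> mJ geJ r; have [ee _ _ _] := geJ.
rewrite -(minimal_idempotent_corner mJ geJ); apply/eqP; rewrite -subr_eq0; apply/eqP.
set t := r * e - e * r * e.
have et : e * t = 0 by rewrite /t mulrBr !mulrA ee subrr.
have te : t * e = t by rewrite /t mulrBl -!(mulrA _ e e) !ee.
apply: NNPP => nt; have [J0 [mJ0 J0t]] := semiartinian_has_minimal SA nt.
have [f geJ0] := minimal_idempotent_generator vN mJ0; have [ff nf J0f _] := geJ0.
have fcorner := minimal_idempotent_corner mJ0 geJ0.
have [s fts] := J0t f J0f.
have ef : e * f = 0 by rewrite fts mulrA et mul0r.
have fe : f * e = 0 by rewrite -fcorner -mulrA ef mulr0.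
have ft : f * t = 0 by rewrite -te mulrA -fcorner -mulrA fe mulr0.
by apply: nf; rewrite -ff {2}fts mulrA ft mul0r.
Qed.

Lemma minimal_corners_commutative : commutative_ring R.
Proof.
move=> a b; apply/eqP; rewrite -subr_eq0; apply/eqP; apply: NNPP => nd.
have [J0 [mJ0 J0d]] := semiartinian_has_minimal SA nd.
have [e geJ0] := minimal_idempotent_generator vN mJ0; have [ee ne Je _] := geJ0.
have [w edw] := J0d e Je.
have eC := minimal_idempotent_central mJ0 geJ0.
have eue u : e * u * e = e * u by rewrite -mulrA eC mulrA ee.
have corner u v : e * u * e * (e * v * e) = e * (u * v).
  by rewrite !eue mulrA eue -mulrA.
have [rJ0 _ _ _] := mJ0; have [EndC _] := minC mJ0.
have ed : e * (a * b - b * a) = 0.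
  by rewrite mulrBr -!corner (corner_mulC rJ0 EndC ee Je a b) subrr.
by apply: ne; rewrite -ee {2}edw mulrA ed mul0r.
Qed.

End CommutativeCorners.

Theorem corollary3p6 (R : nzRingType) :
  von_neumann_regular R -> semiartinian R -> primitive_factors_artinian R ->
  (commutative_ring R <->
     (forall I J : R -> Prop, socle_stage I -> minimal_over I J ->
        End_commutative I J /\ End_dim I J 1))
  /\
  ((forall I J : R -> Prop, socle_stage I -> minimal_over I J ->
        End_commutative I J /\ End_dim I J 1) <->
     (forall J, minimal_over (fun x : R => x = 0) J ->
        End_commutative (fun x : R => x = 0) J /\ End_dim (fun x : R => x = 0) J 1)).
Proof.
move=> vN SA _.
have i_ii (mulC : commutative_ring R) (I J : R -> Prop) : socle_stage I -> minimal_over I J ->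
    End_commutative I J /\ End_dim I J 1.
  move=> /socle_stage_right_ideal rI mJ.
  by split; [apply: End_commutative_comm | apply: End_dim1_comm].
have iii_i := minimal_corners_commutative vN SA.
split; split=> [|ii].
- exact: i_ii.
- by apply: iii_i => J; apply: ii (socle_zero R).
- by move=> ii J; apply: ii (socle_zero R).
- by apply: i_ii; apply: iii_i.
Qed.
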